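(* Let $S$ be training data, $\mathrm{NN}(\{m_l\}_{l=0}^L)$ a fully-connected network, and $\mathcal T_S$ a one-layer lifting to a one-layer deeper $\mathrm{NN}'$. If a parameter $\theta_{\mathrm{shal}}$ of $\mathrm{NN}$ satisfies $\nabla_\theta R_S(\theta_{\mathrm{shal}})=0$, then $\nabla_{\theta'}R_S(\theta'_{\mathrm{deep}})=0$ for every $\theta'_{\mathrm{deep}}\in\mathcal T_S(\theta_{\mathrm{shal}})$.
   Context: $\sigma$ has a non-constant linear segment; $\sigma$ and $\ell(\cdot,y)$ are assigned fixed (sub)derivatives $\sigma'$, $\nabla\ell$ (gradient in first argument) at every point, agreeing with classical derivatives wherever these exist. Network: $\theta=(W^{[1]},b^{[1]},\dots,W^{[L]},b^{[L]})$, $W^{[l]}\in\mathbb R^{m_l\times m_{l-1}}$, $\theta|_l=(W^{[l]},b^{[l]})$; $f^{[0]}_\theta(x)=x$, $f^{[l]}_\theta=\sigma(W^{[l]}f^{[l-1]}_\theta+b^{[l]})$ for hidden $l$, $f_\theta=f^{[L]}_\theta=W^{[L]}f^{[L-1]}_\theta+b^{[L]}$. Data $S=\{(x_i,y_i)\}_{i=1}^n$, $S_x=\{x_i\}$, $\mathbb E_S h=\frac1n\sum_i h(x_i,y_i)$, $R_S(\theta)=\mathbb E_S\ell(f_\theta(x),y)$. Gradient (for any layered network, with ''predecessor/successor'' following the layer order): $g^{[L]}_\theta=\mathbf 1$, $g^{[l]}_\theta(x)=\sigma'(W^{[l]}f^{[l^-]}_\theta(x)+b^{[l]})$ for hidden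 $l$; $z^{[L]}_\theta(x)=\nabla\ell(f_\theta(x),y)$, $z^{[l]}_\theta=(W^{[l^+]})^\top(z^{[l^+]}_\theta\circ g^{[l^+]}_\theta)$ where $l^-,l^+$ are the predecessor and successor of $l$; $\nabla_{W^{[l]}}R_S=\mathbb E_S[(z^{[l]}_\theta\circ g^{[l]}_\theta)(f^{[l^-]}_\theta)^\top]$, $\nabla_{b^{[l]}}R_S=\mathbb E_S[z^{[l]}_\theta\circ g^{[l]}_\theta]$; $\nabla_\theta R_S(\theta)=0$ means all these vanish. Affine subdomain: open interval $(a,b)$ with $\lambda\ne0,\mu$ such that $\sigma(x)=\lambda x+\mu$ on $(a,b)$. One-layer deeper: $\mathrm{NN}'$ with layers $0,1,\dots,q,\hat q,q+1,\dots,L$ ($q\in\{0,\dots,L-1\}$, $\hat q$ a new hidden layer with activation $\sigma$), $m'_l=m_l$ for $l\ne\hat q$, $m'_{\hat q}\ge\min\{m_q,m_{q+1}\}$. One-layer lifting: $\mathcal T_S(\theta)$ is the set of $\theta'$ with (i) $\theta'|_l=\theta|_l$ for $l\in[q]\cup[q+2:L]$, $(W'^{[\hat q]},b'^{[\hat q]})\in\mathbb R^{m'_{\hat q}\times m_q}\times\mathbb R^{m'_{\hat q}}$, $(W'^{[q+1]},b'^{[q+1]})\in\mathbb R^{m_{q+1}\times m'_{\hat q}}\times\mathbb R^{m_{q+1}}$; (ii) for each $j\in[m'_{\hat q}]$ an affine subdomain $(a_j,b_j)$ with constants $\lambda_j,\mu_j$ such that $(W'^{[\hat q]}f^{[q]}_{\theta'}(x)+b'^{[\hat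 q]})_j\in(a_j,b_j)$ for all $x\in S_x$; (iii) $W'^{[q+1]}\mathrm{diag}(\lambda)W'^{[\hat q]}=W^{[q+1]}$ and $W'^{[q+1]}\mathrm{diag}(\lambda)b'^{[\hat q]}+W'^{[q+1]}\mu+b'^{[q+1]}=b^{[q+1]}$, with $\lambda=(\lambda_j)$, $\mu=(\mu_j)$. *)

From HB Require Import structures.
From mathcomp Require Import all_boot all_order all_algebra.
From mathcomp Require Import all_classical all_reals all_analysis.
Set Implicit Arguments. Unset Strict Implicit. Unset Printing Implicit Defensive.
Import Order.TTheory GRing.Theory Num.Theory.
Import numFieldNormedType.Exports.
Local Open Scope ring_scope.

(* Parameters of a layered fully-connected network, stored nat-indexed:
   Wt l i j = (W^[l])_{ij}, bs l i = (b^[l])_i. Only the entries with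
   1 <= l <= L, i < m l, j < m (l-1) are meaningful. *)
Record netparam (R : Type) := NetParam {
  Wt : nat -> nat -> nat -> R;
  bs : nat -> nat -> R }.

(* i-th coordinate of a column vector (0 outside range). *)
Definition vget (R : ringType) (n : nat) (v : 'cV[R]_n) (i : nat) : R :=
  \sum_(j < n | val j == i) v j 0.

Section Net.
Variables (R : realType) (Y : Type) (sigma sigma' : R -> R).
Variables (nout : nat) (dell : 'cV[R]_nout -> Y -> 'cV[R]_nout).
Variables (L : nat) (m : nat -> nat) (th : netparam R).

Fixpoint fwd (x : nat -> R) (l : nat) : nat -> R :=
  match l with
  | 0 => x
  | k.+1 => fun i =>
      let a := \sum_(j < m k) Wt th k.+1 i j * fwd x k j + bs th k.+1 i in
      if k.+1 == L then a else sigma a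
  end.

Definition pre (x : nat -> R) (l i : nat) : R :=
  \sum_(j < m l.-1) Wt th l i j * fwd x l.-1 j + bs th l i.

Definition gact (x : nat -> R) (l i : nat) : R :=
  if l == L then 1 else sigma' (pre x l i).

Definition out (x : nat -> R) : 'cV[R]_nout := \col_(i < nout) fwd x L i.

(* zrec x y k = z^[L-k]_theta(x) *)
Fixpoint zrec (x : nat -> R) (y : Y) (k : nat) : nat -> R :=
  match k with
  | 0 => fun i => vget (dell (out x) y) i
  | k'.+1 => fun i =>
      \sum_(j < m (L - k')) Wt th (L - k') j i * (zrec x y k' j * gact x (L - k') j)
  end.

Definition zb (x : nat -> R) (y : Y) (l : nat) : nat -> R := zrec x y (L - l).

Variables (n0 N : nat) (xs : 'I_N -> 'cV[R]_n0) (ys : 'I_N -> Y).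


Definition ES' (h : 'I_N -> R) : R := (N%:R)^-1 * \sum_(k < N) h k.

Definition gradW (l i j : nat) : R :=
  ES' (fun k => let x := vget (xs k) in
     zb x (ys k) l i * gact x l i * fwd x l.-1 j).

Definition gradb (l i : nat) : R :=
  ES' (fun k => let x := vget (xs k) in zb x (ys k) l i * gact x l i).

Definition critical : Prop :=
  forall l, (0 < l <= L)%N ->
    (forall i j, (i < m l)%N -> (j < m l.-1)%N -> gradW l i j = 0) /\
    (forall i, (i < m l)%N -> gradb l i = 0).

End Net.

Definition affine_subdomain (R : realType) (sigma : R -> R) (a b lam mu : R) : Prop :=
  a < b /\ lam != 0 /\ forall t, a < t < b -> sigma t = lam * t + mu.

(* widths of the one-layer deeper network NN': layers 0..q, qhat, q+1..L
   are renumbered 0..q, q+1, q+2..L+1; qhat has width mh. *)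
Definition deep_widths (m : nat -> nat) (q mh : nat) (l : nat) : nat :=
  if (l <= q)%N then m l else if l == q.+1 then mh else m l.-1.

(* th' is in the one-layer lifting T_S(th) (deep layer q+1 = qhat,
   deep layer l+1 = original layer l for l >= q+1). *)
Definition one_layer_lifting (R : realType) (sigma : R -> R)
    (L : nat) (m : nat -> nat) (q mh : nat)
    (n0 N : nat) (xs : 'I_N -> 'cV[R]_n0)
    (th th' : netparam R) : Prop :=
  (forall l, (0 < l <= q)%N ->
     (forall i j, (i < m l)%N -> (j < m l.-1)%N -> Wt th' l i j = Wt th l i j) /\
     (forall i, (i < m l)%N -> bs th' l i = bs th l i)) /\
  (forall l, (q.+2 <= l <= L)%N ->
     (forall i j, (i < m l)%N -> (j < m l.-1)%N -> Wt th' l.+1 i j = Wt th l i j) /\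
     (forall i, (i < m l)%N -> bs th' l.+1 i = bs th l i)) /\
  exists lam mu : nat -> R,
    (forall j, (j < mh)%N -> exists a b : R,
       affine_subdomain sigma a b (lam j) (mu j) /\
       forall k : 'I_N,
         a < pre sigma L.+1 (deep_widths m q mh) th' (vget (xs k)) q.+1 j < b) /\
    (forall i j, (i < m q.+1)%N -> (j < m q)%N ->
       \sum_(k < mh) Wt th' q.+2 i k * lam k * Wt th' q.+1 k j = Wt th q.+1 i j) /\
    (forall i, (i < m q.+1)%N ->
       \sum_(k < mh) Wt th' q.+2 i k * (lam k * bs th' q.+1 k + mu k)
         + bs th' q.+2 i = bs th q.+1 i).

From HB Require Import structures.
From mathcomp Require Import all_boot all_order all_algebra.
From mathcomp Require Import all_classical all_reals all_analysis.
From mathcomp Require Import zify ring.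
Import Order.TTheory GRing.Theory Num.Theory.
Import numFieldNormedType.Exports.
Local Open Scope ring_scope.

(* On every training input the pre-activations of the inserted layer stay in
   affine pieces of sigma, so there the layer acts as x |-> diag(lam) x + mu and
   its derivative is diag(lam).  Condition (iii) then says that the two deep
   layers around it compose to the shallow layer q+1, so the deep forward pass
   reproduces the shallow one and back-propagation reproduces the shallow
   signals z.  Consequently every deep gradient block is either a shallow
   gradient block or (at the two layers adjacent to the inserted one) a linear
   combination of shallow gradient blocks of layer q+1, and vanishes whenever
   the shallow gradient does. *)

Lemma affine_subdomain_derive (R : realType) (sigma sigma' : R -> R) a b lam mu t :
  (forall t, derivable sigma t 1 -> sigma' t = 'D_1 sigma t) ->
  affine_subdomain sigma a b lam mu -> a < t < b -> sigma' t = lam.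
Proof.
move=> Hsig' [_ [_ Haff]] Ht.
have near_affine : \forall z \near t, lam * z + mu = sigma z.
  have : t \in `]a, b[ by rewrite in_itv.
  by move/near_in_itvoo; apply: filterS => z; rewrite in_itv /= => /Haff ->.
have affine_derive : is_derive t 1 (fun z : R => lam * z + mu) lam.
  by apply: is_derive_eq; rewrite addr0; exact: mulr1.
have := near_eq_is_derive near_affine affine_derive => sigma_derive.
by rewrite Hsig' ?derive_val //; exact: ex_derive.
Qed.

Lemma nat_down_ind (P : nat -> Prop) (lo hi : nat) :
  P hi -> (forall l, (lo <= l < hi)%N -> P l.+1 -> P l) ->
  forall l, (lo <= l <= hi)%N -> P l.
Proof.
move=> Phi step l Hl; have -> : l = (hi - (hi - l))%N by lia.
have : (hi - l <= hi - lo)%N by lia.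
elim: (hi - l)%N => [|d IH] Hd; first by rewrite subn0.
by apply: step; [lia | rewrite (_ : (hi - d.+1).+1 = hi - d)%N; [apply: IH|]; lia].
Qed.

Section EmpiricalMean.
Variables (R : realType) (N : nat).

Lemma eq_ES' (f g : 'I_N -> R) : f =1 g -> ES' f = ES' g.
Proof. by move=> fg; rewrite /ES' (eq_bigr _ (fun k _ => fg k)). Qed.

Lemma ES'_add (f g : 'I_N -> R) : ES' (fun k => f k + g k) = ES' f + ES' g.
Proof. by rewrite /ES' big_split mulrDr. Qed.

Lemma ES'_scale c (f : 'I_N -> R) : ES' (fun k => c * f k) = c * ES' f.
Proof. by rewrite /ES' -mulr_sumr mulrCA. Qed.

Lemma ES'_sum n (h : 'I_n -> 'I_N -> R) :
  ES' (fun k => \sum_(i < n) h i k) = \sum_(i < n) ES' (h i).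
Proof. by rewrite /ES' exchange_big mulr_sumr. Qed.

End EmpiricalMean.

Section Network.
Variables (R : realType) (Y : Type) (sigma sigma' : R -> R) (nout : nat).
Variables (dell : 'cV[R]_nout -> Y -> 'cV[R]_nout).
Variables (L : nat) (m : nat -> nat) (th : netparam R).

Lemma fwd_succ x l i : fwd sigma L m th x l.+1 i =
  if l.+1 == L then pre sigma L m th x l.+1 i else sigma (pre sigma L m th x l.+1 i).
Proof. by []. Qed.

Lemma pre_succ x l i : pre sigma L m th x l.+1 i =
  \sum_(j < m l) Wt th l.+1 i j * fwd sigma L m th x l j + bs th l.+1 i.
Proof. by []. Qed.

Lemma zb_top x y i : zb sigma sigma' dell L m th x y L i = vget (dell (out sigma nout L m th x) y) i.
Proof. by rewrite /zb subnn. Qed.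

Lemma zb_backprop x y l i : (l < L)%N ->
  zb sigma sigma' dell L m th x y l i =
  \sum_(j < m l.+1) Wt th l.+1 j i *
     (zb sigma sigma' dell L m th x y l.+1 j * gact sigma sigma' L m th x l.+1 j).
Proof.
move=> lL; rewrite /zb (_ : L - l = (L - l.+1).+1)%N; last by lia.
by rewrite /= (_ : L - (L - l.+1) = l.+1)%N; last by lia.
Qed.

End Network.

Lemma fwd_shift (R : realType) (sigma : R -> R) L (m m' : nat -> nat)
    (th th' : netparam R) x l i : (0 < l)%N ->
  pre sigma L.+1 m' th' x l.+1 i = pre sigma L m th x l i ->
  fwd sigma L.+1 m' th' x l.+1 i = fwd sigma L m th x l i.
Proof. by case: l => // l _; rewrite !fwd_succ eqSS => ->. Qed.

Section DeepWidths.
Variables (m : nat -> nat) (q mh : nat).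

Lemma deep_widths_low l : (l <= q)%N -> deep_widths m q mh l = m l.
Proof. by rewrite /deep_widths => ->. Qed.

Lemma deep_widths_hat : deep_widths m q mh q.+1 = mh.
Proof. by rewrite /deep_widths ltnn eqxx. Qed.

Lemma deep_widths_high l : (q.+2 <= l)%N -> deep_widths m q mh l = m l.-1.
Proof.
move=> ql; rewrite /deep_widths ifF; last by apply/negbTE; rewrite -ltnNge; lia.
by rewrite ifF //; apply/eqP; lia.
Qed.

End DeepWidths.

Section Lifting.
Variables (R : realType) (Y : Type) (sigma sigma' : R -> R) (L : nat) (m : nat -> nat).
Variables (dell : 'cV[R]_(m L) -> Y -> 'cV[R]_(m L)) (q mh : nat).
Variables (th th' : netparam R) (lam mu : nat -> R).
Hypothesis qL : (q < L)%N.
Hypothesis W_low : forall l i j, (0 < l <= q)%N -> (i < m l)%N -> (j < m l.-1)%N ->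
  Wt th' l i j = Wt th l i j.
Hypothesis b_low : forall l i, (0 < l <= q)%N -> (i < m l)%N -> bs th' l i = bs th l i.
Hypothesis W_high : forall l i j, (q.+2 <= l <= L)%N -> (i < m l)%N -> (j < m l.-1)%N ->
  Wt th' l.+1 i j = Wt th l i j.
Hypothesis b_high : forall l i, (q.+2 <= l <= L)%N -> (i < m l)%N ->
  bs th' l.+1 i = bs th l i.
Hypothesis W_hat : forall i j, (i < m q.+1)%N -> (j < m q)%N ->
  \sum_(k < mh) Wt th' q.+2 i k * lam k * Wt th' q.+1 k j = Wt th q.+1 i j.
Hypothesis b_hat : forall i, (i < m q.+1)%N ->
  \sum_(k < mh) Wt th' q.+2 i k * (lam k * bs th' q.+1 k + mu k)
    + bs th' q.+2 i = bs th q.+1 i.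

Local Notation md := (deep_widths m q mh).
Local Notation fS := (fwd sigma L m th).
Local Notation fD := (fwd sigma L.+1 md th').
Local Notation pS := (pre sigma L m th).
Local Notation pD := (pre sigma L.+1 md th').
Local Notation gS := (gact sigma sigma' L m th).
Local Notation gD := (gact sigma sigma' L.+1 md th').
Local Notation zS := (zb sigma sigma' dell L m th).
Local Notation zD := (zb sigma sigma' dell L.+1 md th').

Section Input.
Variable x : nat -> R.
Hypothesis hat_affine : forall j, (j < mh)%N ->
  sigma (pD x q.+1 j) = lam j * pD x q.+1 j + mu j /\ sigma' (pD x q.+1 j) = lam j.

Lemma fwd_lift_low l i : (l <= q)%N -> (i < m l)%N -> fD x l i = fS x l i.
Proof.
elim: l i => [//|l IH] i lq Hi.
rewrite !fwd_succ !ifF; try by apply/eqP; lia.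
congr sigma; rewrite !pre_succ deep_widths_low; last by lia.
rewrite b_low //; congr (_ + _); apply: eq_bigr => j _.
by rewrite IH ?W_low //; lia.
Qed.

Lemma pre_lift_low l i : (0 < l <= q)%N -> (i < m l)%N -> pD x l i = pS x l i.
Proof.
case: l => // l lq Hi; rewrite !pre_succ deep_widths_low; last by lia.
rewrite b_low //; congr (_ + _); apply: eq_bigr => j _.
by rewrite fwd_lift_low ?W_low //; lia.
Qed.

Lemma fwd_lift_hat j : (j < mh)%N -> fD x q.+1 j = lam j * pD x q.+1 j + mu j.
Proof.
move=> Hj; rewrite fwd_succ ifF; last by apply/eqP; lia.
by case: (hat_affine _ Hj).
Qed.

Lemma pre_lift_hat j :
  pD x q.+1 j = \sum_(k < m q) Wt th' q.+1 j k * fS x q k + bs th' q.+1 j.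
Proof.
rewrite pre_succ deep_widths_low //; congr (_ + _); apply: eq_bigr => k _.
by rewrite fwd_lift_low.
Qed.

Lemma pre_lift_above_hat i : (i < m q.+1)%N -> pD x q.+2 i = pS x q.+1 i.
Proof.
move=> Hi; rewrite pre_succ deep_widths_hat.
rewrite (eq_bigr (fun k : 'I_mh =>
    \sum_(j < m q) Wt th' q.+2 i k * lam k * Wt th' q.+1 k j * fS x q j
    + Wt th' q.+2 i k * (lam k * bs th' q.+1 k + mu k))); last first.
  move=> k _; rewrite fwd_lift_hat // pre_lift_hat.
  by under [X in _ = X + _]eq_bigr do rewrite -mulrA; rewrite -mulr_sumr; ring.
rewrite big_split /= exchange_big /= -addrA b_hat // pre_succ.
congr (_ + _); apply: eq_bigr => j _.
by rewrite -mulr_suml -W_hat.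
Qed.

Lemma pre_lift_high l i : (q.+1 <= l <= L)%N -> (i < m l)%N -> pD x l.+1 i = pS x l i.
Proof.
elim: l i => [|l IH] i Hl Hi; first by lia.
have [lq|lq] := eqVneq l q; first by subst l; exact: pre_lift_above_hat.
rewrite !pre_succ deep_widths_high; last by lia.
rewrite b_high //; last by lia.
congr (_ + _); apply: eq_bigr => j _.
by rewrite (@fwd_shift _ _ _ m _ th) ?IH ?W_high //; lia.
Qed.

Lemma fwd_lift_high l i : (q.+1 <= l <= L)%N -> (i < m l)%N -> fD x l.+1 i = fS x l i.
Proof. by move=> Hl Hi; apply: fwd_shift; [lia | exact: pre_lift_high]. Qed.

Lemma out_lift : out sigma (m L) L.+1 md th' x = out sigma (m L) L m th x.
Proof. by apply/matrixP => i j; rewrite !mxE fwd_lift_high //; lia. Qed.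

Lemma gact_lift_low l i : (0 < l <= q)%N -> (i < m l)%N -> gD x l i = gS x l i.
Proof.
move=> Hl Hi; rewrite /gact !ifF ?pre_lift_low //; apply/eqP; lia.
Qed.

Lemma gact_lift_hat j : (j < mh)%N -> gD x q.+1 j = lam j.
Proof.
move=> Hj; rewrite /gact ifF; last by apply/eqP; lia.
by case: (hat_affine _ Hj).
Qed.

Lemma gact_lift_high l i : (q.+1 <= l <= L)%N -> (i < m l)%N -> gD x l.+1 i = gS x l i.
Proof. by move=> Hl Hi; rewrite /gact eqSS pre_lift_high. Qed.

Variable y : Y.

Lemma zb_lift_high l i : (q.+1 <= l <= L)%N -> (i < m l)%N -> zD x y l.+1 i = zS x y l i.
Proof.
move=> Hl; move: l Hl i; apply: (@nat_down_ind _ q.+1 L) => [i _|l Hl IH i Hi].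
  by rewrite !zb_top out_lift.
rewrite !zb_backprop; try lia.
rewrite deep_widths_high; last by lia.
apply: eq_bigr => j _.
by rewrite IH ?gact_lift_high ?W_high //; lia.
Qed.

Lemma zb_lift_hat j : (j < mh)%N ->
  zD x y q.+1 j = \sum_(i < m q.+1) Wt th' q.+2 i j * (zS x y q.+1 i * gS x q.+1 i).
Proof.
move=> Hj; rewrite zb_backprop; last by lia.
rewrite deep_widths_high //; apply: eq_bigr => i _.
by rewrite zb_lift_high ?gact_lift_high //; lia.
Qed.

Lemma zb_lift_below_hat i : (i < m q)%N -> zD x y q i = zS x y q i.
Proof.
move=> Hi; rewrite !zb_backprop //; last by lia.
rewrite deep_widths_hat.
under eq_bigr => k _ do rewrite zb_lift_hat // gact_lift_hat // mulr_suml mulr_sumr.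
rewrite exchange_big /=; apply: eq_bigr => j _.
rewrite -W_hat // mulr_suml; apply: eq_bigr => k _; ring.
Qed.

Lemma zb_lift_low l i : (l <= q)%N -> (i < m l)%N -> zD x y l i = zS x y l i.
Proof.
move=> lq; have Hl : (0 <= l <= q)%N by [].
move: l Hl i {lq}; apply: (@nat_down_ind _ 0 q) => [|l Hl IH i Hi].
  exact: zb_lift_below_hat.
rewrite !zb_backprop; try lia.
rewrite deep_widths_low; last by lia.
apply: eq_bigr => j _.
by rewrite IH ?gact_lift_low ?W_low //; lia.
Qed.

End Input.

Variables (N : nat) (xs : 'I_N -> 'cV[R]_(m 0%N)) (ys : 'I_N -> Y).
Hypothesis hat_affine_samples : forall (k : 'I_N) j, (j < mh)%N ->
  sigma (pD (vget (xs k)) q.+1 j) = lam j * pD (vget (xs k)) q.+1 j + mu j /\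
  sigma' (pD (vget (xs k)) q.+1 j) = lam j.

Local Notation gWS := (gradW sigma sigma' dell L m th xs ys).
Local Notation gWD := (gradW sigma sigma' dell L.+1 md th' xs ys).
Local Notation gbS := (gradb sigma sigma' dell L m th xs ys).
Local Notation gbD := (gradb sigma sigma' dell L.+1 md th' xs ys).

Lemma gradW_lift_low l i j : (0 < l <= q)%N -> (i < m l)%N -> (j < m l.-1)%N ->
  gWD l i j = gWS l i j.
Proof.
move=> Hl Hi Hj; apply: eq_ES' => k; have hk := hat_affine_samples k.
by cbv zeta; rewrite zb_lift_low ?gact_lift_low ?fwd_lift_low //; lia.
Qed.

Lemma gradb_lift_low l i : (0 < l <= q)%N -> (i < m l)%N -> gbD l i = gbS l i.
Proof.
move=> Hl Hi; apply: eq_ES' => k; have hk := hat_affine_samples k.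
by cbv zeta; rewrite zb_lift_low ?gact_lift_low //; lia.
Qed.

Lemma gradW_lift_hat i j : (i < mh)%N -> (j < m q)%N ->
  gWD q.+1 i j = \sum_(i0 < m q.+1) Wt th' q.+2 i0 i * lam i * gWS q.+1 i0 j.
Proof.
move=> Hi Hj; under eq_bigr do rewrite -ES'_scale.
rewrite -ES'_sum; apply: eq_ES' => k; have hk := hat_affine_samples k.
cbv zeta; rewrite zb_lift_hat // gact_lift_hat // fwd_lift_low // !mulr_suml.
by apply: eq_bigr => i0 _; ring.
Qed.

Lemma gradb_lift_hat i : (i < mh)%N ->
  gbD q.+1 i = \sum_(i0 < m q.+1) Wt th' q.+2 i0 i * lam i * gbS q.+1 i0.
Proof.
move=> Hi; under eq_bigr do rewrite -ES'_scale.
rewrite -ES'_sum; apply: eq_ES' => k; have hk := hat_affine_samples k.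
cbv zeta; rewrite zb_lift_hat // gact_lift_hat // !mulr_suml.
by apply: eq_bigr => i0 _; ring.
Qed.

Lemma gradW_lift_above_hat i j : (i < m q.+1)%N -> (j < mh)%N ->
  gWD q.+2 i j = \sum_(j0 < m q) lam j * Wt th' q.+1 j j0 * gWS q.+1 i j0
                 + (lam j * bs th' q.+1 j + mu j) * gbS q.+1 i.
Proof.
move=> Hi Hj; under eq_bigr do rewrite -ES'_scale.
rewrite -ES'_sum -ES'_scale -ES'_add; apply: eq_ES' => k.
have hk := hat_affine_samples k; have hqL : (q < q.+1 <= L)%N by lia.
cbv zeta; rewrite fwd_lift_hat // pre_lift_hat zb_lift_high ?gact_lift_high //.
set z := _ * gS _ _ _.
rewrite [in RHS](eq_bigr (fun j0 : 'I_(m q) =>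
  z * lam j * (Wt th' q.+1 j j0 * fS (vget (xs k)) q j0))); last by move=> j0 _; ring.
by rewrite -mulr_sumr; ring.
Qed.

Lemma gradW_lift_high l i j : (q.+2 <= l <= L)%N -> (i < m l)%N -> (j < m l.-1)%N ->
  gWD l.+1 i j = gWS l i j.
Proof.
move=> Hl Hi Hj; apply: eq_ES' => k; have hk := hat_affine_samples k.
case: l Hl Hi Hj => [|l] Hl Hi Hj; first by lia.
by cbv zeta; rewrite zb_lift_high ?gact_lift_high ?fwd_lift_high //; lia.
Qed.

Lemma gradb_lift_high l i : (q.+1 <= l <= L)%N -> (i < m l)%N -> gbD l.+1 i = gbS l i.
Proof.
move=> Hl Hi; apply: eq_ES' => k; have hk := hat_affine_samples k.
by cbv zeta; rewrite zb_lift_high ?gact_lift_high //; lia.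
Qed.

Lemma lifting_critical : critical sigma sigma' dell L m th xs ys ->
  critical sigma sigma' dell L.+1 md th' xs ys.
Proof.
move=> crit l Hl.
have [lq|ql] := leqP l q.
  have {}Hl : (0 < l <= q)%N by lia.
  have [critW critb] := crit l ltac:(lia).
  rewrite !deep_widths_low //; last by lia.
  split=> [i j Hi Hj|i Hi].
    by rewrite gradW_lift_low ?critW.
  by rewrite gradb_lift_low ?critb.
have [critW critb] := crit q.+1 ltac:(lia).
have [->|lq1] := eqVneq l q.+1.
  rewrite deep_widths_hat deep_widths_low //.
  split=> [i j Hi Hj|i Hi].
    by rewrite gradW_lift_hat // big1 // => i0 _; rewrite critW ?mulr0.
  by rewrite gradb_lift_hat // big1 // => i0 _; rewrite critb ?mulr0.
have [->|lq2] := eqVneq l q.+2.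
  rewrite deep_widths_high // deep_widths_hat.
  split=> [i j Hi Hj|i Hi].
    rewrite gradW_lift_above_hat // critb // mulr0 addr0.
    by rewrite big1 // => j0 _; rewrite critW ?mulr0.
  by rewrite gradb_lift_high ?critb //; lia.
case: l Hl ql lq1 lq2 => [|l] Hl ql lq1 lq2; first by lia.
have {critW critb} [critW critb] := crit l ltac:(lia).
rewrite !deep_widths_high; try lia.
split=> [i j Hi Hj|i Hi].
  by rewrite gradW_lift_high ?critW //; lia.
by rewrite gradb_lift_high ?critb //; lia.
Qed.

End Lifting.

Theorem proposition2 (R : realType) (Y : Type) (sigma sigma' : R -> R)
    (L : nat) (m : nat -> nat)
    (ell : 'cV[R]_(m L) -> Y -> R) (dell : 'cV[R]_(m L) -> Y -> 'cV[R]_(m L))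
    (Hlin : exists a b lam mu : R, affine_subdomain sigma a b lam mu)
    (Hsig' : forall t : R, derivable sigma t 1 -> sigma' t = 'D_1 sigma t)
    (Hell : forall (y : Y) (v : 'cV[R]_(m L)),
        differentiable (fun u => ell u y) v ->
        forall i, dell v y i 0 = 'D_(delta_mx i 0) (fun u => ell u y) v)
    (N : nat) (xs : 'I_N -> 'cV[R]_(m 0%N)) (ys : 'I_N -> Y)
    (q mh : nat) (Hq : (q < L)%N) (Hmh : (minn (m q) (m q.+1) <= mh)%N)
    (th_shal th'_deep : netparam R)
    (Hcrit : critical sigma sigma' dell L m th_shal xs ys)
    (Hlift : one_layer_lifting sigma L m q mh xs th_shal th'_deep) :
  critical sigma sigma' dell L.+1 (deep_widths m q mh) th'_deep xs ys.
Proof.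
case: Hlift => low [high [lam [mu [hat_in [W_hat b_hat]]]]].
apply: (@lifting_critical R Y sigma sigma' L m dell q mh th_shal th'_deep lam mu Hq) => //.
- by move=> l i j Hl; apply: (proj1 (low l Hl)).
- by move=> l i Hl; apply: (proj2 (low l Hl)).
- by move=> l i j Hl; apply: (proj1 (high l Hl)).
- by move=> l i Hl; apply: (proj2 (high l Hl)).
- move=> k j Hj; have [a [b [aff_ab in_ab]]] := hat_in j Hj.
  split; first by case: aff_ab => _ [_ ->] //; exact: in_ab.
  exact: affine_subdomain_derive Hsig' aff_ab (in_ab k).
Qed.
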